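(* Let $M\in\mathbb N$, $M\ge1$, and $x_0,x_1\in\{x:|x-1|\le p^{-M}\}$. If $\lambda_0,\lambda_1\in\Lambda$ satisfy $|\lambda_0-\lambda_1|=|x_0-x_1|$, then $$|Q^M_{\lambda_0}(x_0)-Q^M_{\lambda_1}(x_1)|=p^M|\lambda_0-\lambda_1|.$$
   Context: Let $p$ be a prime, $\mathbb C_p$ with $p$-adic absolute value, $|p|=1/p$. $\Lambda=\{\lambda\in\mathbb C_p:|\lambda-1|<1\}$, $P_\lambda(z)=\frac{\lambda}{p}z^p+\left(1-\frac{\lambda}{p}\right)z^{p+1}$, $\rho=p^{-1/(p-1)}$. Fix $\hat r\in|\mathbb C_p^*|$, $\hat r>1$, $B=\{z:|z|\le\hat r\}$; $\mathcal H(B)$ is the ring of power series $\sum a_iz^i$ convergent on $B$ with norm $\|f\|_B=\sup_i|a_i|\hat r^{\,i}$. Fix $Q\in\mathcal H(B)$ with $\|Q\|_B<\rho$, $Q^*_\lambda=P_\lambda+Q$, and let $h(\lambda)$ be the unique fixed point of $Q^*_\lambda$ in $\{z:|z-1|\le|Q(1)|/p\}$. Define $Q_\lambda(z)=P_\lambda(z+h(\lambda)-1)+Q(z+h(\lambda)-1)+1-h(\lambda)$ for $z\in B$; $Q_\lambda^n$ denotes the $n$-th iterate. *)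

From HB Require Import structures.
From mathcomp Require Import all_boot all_order all_algebra.
From mathcomp Require Import all_classical all_reals all_analysis.
Set Implicit Arguments. Unset Strict Implicit. Unset Printing Implicit Defensive.
Import Order.TTheory GRing.Theory Num.Theory numFieldNormedType.Exports.
Local Open Scope classical_set_scope.
Local Open Scope ring_scope.

Section Defs.
Variables (R : realType) (K : closedFieldType).

Definition abs_cvg (abs : K -> R) (u : nat -> K) (l : K) : Prop :=
  forall e : R, 0 < e -> exists N : nat, forall n, (N <= n)%N -> abs (u n - l) < e.

Definition abs_cauchy (abs : K -> R) (u : nat -> K) : Prop :=
  forall e : R, 0 < e -> exists N : nat,
    forall m n, (N <= m)%N -> (N <= n)%N -> abs (u m - u n) < e.

(* (K, abs) is a model of C_p: an algebraically closed field (K is a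
   closedFieldType) complete for a non-archimedean absolute value with
   |p| = 1/p. *)
Record Cp_abs (p : nat) (abs : K -> R) : Prop := {
  abs_ge0 : forall x, 0 <= abs x;
  abs_eq0 : forall x, abs x = 0 <-> x = 0;
  absM : forall x y, abs (x * y) = abs x * abs y;
  abs_ultra : forall x y, abs (x + y) <= Num.max (abs x) (abs y);
  abs_p : abs (p%:R) = (p%:R)^-1;
  abs_complete : forall u, abs_cauchy abs u -> exists l, abs_cvg abs u l
}.

Definition rho (p : nat) : R := (p%:R : R) `^ (- ((p%:R : R) - 1)^-1).

Definition psum (a : nat -> K) (z : K) (n : nat) : K := \sum_(i < n) a i * z ^+ i.

Definition ps_eval (abs : K -> R) (a : nat -> K) (z : K) : K :=
  xget 0 [set l | abs_cvg abs (psum a z) l].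

(* a is in H(B), B = {|z| <= rhat}: |a_i| rhat^i -> 0 *)
Definition in_HB (abs : K -> R) (rhat : R) (a : nat -> K) : Prop :=
  (fun i : nat => abs (a i) * rhat ^+ i) @ \oo --> (0 : R).

Definition ps_norm (abs : K -> R) (rhat : R) (a : nat -> K) : R :=
  sup (range (fun i : nat => abs (a i) * rhat ^+ i)).

Definition Plam (p : nat) (lam z : K) : K :=
  lam / p%:R * z ^+ p + (1 - lam / p%:R) * z ^+ p.+1.

Definition Qstar (abs : K -> R) (p : nat) (a : nat -> K) (lam z : K) : K :=
  Plam p lam z + ps_eval abs a z.

Definition hfix (abs : K -> R) (p : nat) (a : nat -> K) (lam : K) : K :=
  xget 0 [set z | abs (z - 1) <= abs (ps_eval abs a 1) / p%:R
                  /\ Qstar abs p a lam z = z].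

Definition Qlam (abs : K -> R) (p : nat) (a : nat -> K) (lam z : K) : K :=
  let h := hfix abs p a lam in
  Plam p lam (z + h - 1) + ps_eval abs a (z + h - 1) + 1 - h.

End Defs.

From HB Require Import structures.
From mathcomp Require Import all_boot all_order all_algebra.
From mathcomp Require Import all_classical all_reals all_analysis.
From mathcomp Require Import ring.
Import Order.TTheory GRing.Theory Num.Theory numFieldNormedType.Exports.
Local Open Scope classical_set_scope.
Local Open Scope ring_scope.
Set Implicit Arguments. Unset Strict Implicit.

(* Write P_lam(z) = z^(p+1) + (lam/p) z^p (1 - z).  On the disc |z - 1| <= 1/p
   the map z |-> z^p (1 - z) is -z up to a (1/p)-Lipschitz error, while z^(p+1)
   and Q are 1-Lipschitz; as |1/p| = p, this gives
   |P_lam0(z) - P_lam1(w)| = p |z - w| whenever |lam0 - lam1| <= |z - w|.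
   The fixed point h(lam) is the limit of iterating the (1/p)-contraction
   z |-> z + (p/lam)(Q*_lam(z) - z), and moves strictly less than lam does.
   Hence Q_lam, the conjugate of Q*_lam by the translation by h(lam) - 1, also
   multiplies such distances by exactly p, and distances to 1 by at most p:
   starting in the disc of radius p^-M, the first M iterates stay in the disc
   of radius 1/p while their distance is multiplied by p at each step. *)

Lemma exists_invn_expr_lt (R : realType) (p : nat) (e : R) : (1 < p)%N -> 0 < e ->
  exists n, ((p%:R : R)^-1) ^+ n < e.
Proof.
move=> p_gt1 e_gt0; set n := Num.Def.archi_bound e^-1; exists n.
have e_lt_n : e^-1 < n%:R by apply: archi_boundP; rewrite invr_ge0 ltW.
have n_lt_pn : (n%:R : R) < (p ^ n)%:R by rewrite ltr_nat ltn_expl.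
have pn_gt0 : 0 < ((p ^ n)%:R : R) by rewrite ltr0n expn_gt0 (ltn_trans _ p_gt1).
by rewrite exprVn -natrX invf_plt ?posrE //; exact: lt_trans e_lt_n n_lt_pn.
Qed.

Lemma rho_le1 (R : realType) (p : nat) : (1 < p)%N -> rho R p <= 1.
Proof.
move=> p_gt1; have p_ge1 : (1 : R) <= p%:R by rewrite ler1n ltnW.
rewrite /rho powRN invf_le1; last exact: powR_gt0 (lt_le_trans ltr01 p_ge1).
rewrite -[X in X <= _](powRr0 (p%:R : R)); apply: ler_powR => //.
by rewrite invr_ge0 subr_ge0.
Qed.

Section CpAbsoluteValue.
Variables (R : realType) (K : closedFieldType) (p : nat) (abs : K -> R).
Hypothesis pr_p : prime p.
Hypothesis Habs : Cp_abs p abs.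

Local Notation ip := ((p%:R : R)^-1).

Lemma abs0 : abs 0 = 0. Proof. by apply/(abs_eq0 Habs). Qed.

Lemma abs_eq0b x : (abs x == 0) = (x == 0).
Proof. by apply/eqP/eqP => [/(abs_eq0 Habs)|->] //; exact: abs0. Qed.

Lemma abs_gt0 x : x != 0 -> 0 < abs x.
Proof. by move=> x_neq0; rewrite lt0r abs_eq0b x_neq0 (abs_ge0 Habs). Qed.

Lemma abs1 : abs 1 = 1.
Proof.
have abs1_neq0 : abs 1 != 0 by rewrite abs_eq0b oner_eq0.
by apply: (mulfI abs1_neq0); rewrite -(absM Habs) !mulr1.
Qed.

Lemma absN1 : abs (-1) = 1.
Proof.
have sq : abs (-1) ^+ 2 = 1 ^+ 2 by rewrite expr2 -(absM Habs) mulrNN mulr1 abs1 expr1n.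
by move/eqP: sq; rewrite eqrXn2 ?(abs_ge0 Habs) // => /eqP.
Qed.

Lemma absN x : abs (- x) = abs x.
Proof. by rewrite -mulN1r (absM Habs) absN1 mul1r. Qed.

Lemma abs_distC x y : abs (x - y) = abs (y - x).
Proof. by rewrite -absN opprB. Qed.

Lemma absX x n : abs (x ^+ n) = abs x ^+ n.
Proof. by elim: n => [|n IH]; rewrite ?abs1 // !exprS (absM Habs) IH. Qed.

Lemma absV x : abs x^-1 = (abs x)^-1.
Proof.
have [->|x_neq0] := eqVneq x 0; first by rewrite invr0 abs0 invr0.
have absx_neq0 : abs x != 0 by rewrite abs_eq0b.
by apply: (mulfI absx_neq0); rewrite -(absM Habs) !mulfV // abs1.
Qed.

Lemma abs_add_le x y c : abs x <= c -> abs y <= c -> abs (x + y) <= c.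
Proof. by move=> hx hy; apply: le_trans (abs_ultra Habs x y) _; rewrite ge_max hx hy. Qed.

Lemma abs_sub_le x y c : abs x <= c -> abs y <= c -> abs (x - y) <= c.
Proof. by move=> hx hy; apply: abs_add_le; rewrite ?absN. Qed.

Lemma abs_add_lt x y c : abs x < c -> abs y < c -> abs (x + y) < c.
Proof. by move=> hx hy; apply: le_lt_trans (abs_ultra Habs x y) _; rewrite gt_max hx hy. Qed.

Lemma abs_add_dom x y : abs y < abs x -> abs (x + y) = abs x.
Proof.
move=> y_lt_x; apply/eqP; rewrite eq_le abs_add_le ?(ltW y_lt_x) //=.
have := abs_ultra Habs (x + y) (- y); rewrite addrK absN le_max.
by case/orP => // x_le_y; move: (lt_le_trans y_lt_x x_le_y); rewrite ltxx.
Qed.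

Lemma abs_sum_le (f : nat -> K) n c : 0 <= c ->
  (forall i, (i < n)%N -> abs (f i) <= c) -> abs (\sum_(i < n) f i) <= c.
Proof.
move=> c_ge0; elim: n => [|n IH] hf; first by rewrite big_ord0 abs0.
by rewrite big_ord_recr /= abs_add_le ?hf // IH // => i /ltnW/hf.
Qed.

Lemma abs_sum_lt (f : nat -> K) n c : 0 < c ->
  (forall i, (i < n)%N -> abs (f i) < c) -> abs (\sum_(i < n) f i) < c.
Proof.
move=> c_gt0; elim: n => [|n IH] hf; first by rewrite big_ord0 abs0.
by rewrite big_ord_recr /= abs_add_lt ?hf // IH // => i /ltnW/hf.
Qed.

Lemma abs_eq1_near1 x : abs (x - 1) < 1 -> abs x = 1.
Proof. by move=> hx; rewrite -(subrK 1 x) addrC abs_add_dom abs1. Qed.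

Lemma abs_le1_near1 x : abs (x - 1) <= 1 -> abs x <= 1.
Proof. by move=> hx; rewrite -(subrK 1 x) abs_add_le ?abs1. Qed.

Lemma abs_subX_le z w n : abs z <= 1 -> abs w <= 1 ->
  abs (z ^+ n - w ^+ n) <= abs (z - w).
Proof.
move=> z_le1 w_le1; elim: n => [|n IH]; first by rewrite subrr abs0 (abs_ge0 Habs).
have -> : z ^+ n.+1 - w ^+ n.+1 = z * (z ^+ n - w ^+ n) + w ^+ n * (z - w).
  by rewrite !exprS; ring.
apply: abs_add_le; rewrite (absM Habs) -[X in _ <= X]mul1r.
  exact: ler_pM (abs_ge0 Habs _) (abs_ge0 Habs _) z_le1 IH.
rewrite absX; apply: ler_wpM2r; first exact: (abs_ge0 Habs).
exact: exprn_ile1 (abs_ge0 Habs _) w_le1.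
Qed.

Lemma natp_gt1 : 1 < (p%:R : R). Proof. by rewrite ltr1n prime_gt1. Qed.

Lemma natp_gt0 : 0 < (p%:R : R). Proof. exact: lt_trans ltr01 natp_gt1. Qed.

Lemma invp_gt0 : 0 < ip. Proof. by rewrite invr_gt0 natp_gt0. Qed.

Lemma invp_lt1 : ip < 1. Proof. by rewrite invf_lt1 ?natp_gt0 ?natp_gt1. Qed.

Lemma natp_mulVX n : p%:R * ip ^+ n.+1 = ip ^+ n.
Proof. by rewrite exprS mulrA mulfV ?mul1r // gt_eqF // natp_gt0. Qed.

Lemma invpX_le n : (0 < n)%N -> ip ^+ n <= ip.
Proof.
case: n => // n _; rewrite exprS ler_piMr ?(ltW invp_gt0) //.
exact: exprn_ile1 (ltW invp_gt0) (ltW invp_lt1).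
Qed.

Lemma natpK_neq0 : (p%:R : K) != 0.
Proof.
apply: contra_eq_neq (abs_p Habs) => ->.
by rewrite abs0 eq_sym invr_eq0 gt_eqF // natp_gt0.
Qed.

Lemma abs_invp : abs (p%:R : K)^-1 = p%:R.
Proof. by rewrite absV (abs_p Habs) invrK. Qed.

Lemma abs_le1_pnear1 z : abs (z - 1) <= ip -> abs z <= 1.
Proof. by move=> hz; apply: abs_le1_near1 (le_trans hz (ltW invp_lt1)). Qed.

Lemma abs_cvg_le u l c : abs_cvg abs u l -> (forall n, abs (u n) <= c) -> abs l <= c.
Proof.
move=> u_cvg u_le; rewrite leNgt; apply/negP => c_lt_l.
have [N hN] := u_cvg (abs l - c) ltac:(by rewrite subr_gt0).
suff : abs (u N + (l - u N)) < abs l by rewrite subrKC ltxx.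
apply: abs_add_lt; first exact: le_lt_trans (u_le N) c_lt_l.
rewrite abs_distC; apply: lt_le_trans (hN N (leqnn _)) _.
by rewrite lerBlDr lerDl (le_trans (abs_ge0 Habs _) (u_le N)).
Qed.

Lemma abs_cvgB u v l m : abs_cvg abs u l -> abs_cvg abs v m ->
  abs_cvg abs (fun n => u n - v n) (l - m).
Proof.
move=> u_cvg v_cvg e e_gt0.
have [[N1 h1] [N2 h2]] := (u_cvg e e_gt0, v_cvg e e_gt0).
exists (maxn N1 N2) => n; rewrite geq_max => /andP[n1 n2].
have -> : u n - v n - (l - m) = (u n - l) - (v n - m) by ring.
by rewrite abs_add_lt ?absN ?h1 ?h2.
Qed.

Definition pert (z : K) := z ^+ p * (1 - z).

Lemma Plam_pert l z : Plam p l z = z ^+ p.+1 + (p%:R)^-1 * (l * pert z).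
Proof. by rewrite /Plam /pert exprS; ring. Qed.

Lemma abs_pert z : abs (z - 1) <= ip -> abs (pert z) <= ip.
Proof.
move=> hz; have z_eq1 : abs z = 1 by apply: abs_eq1_near1 (le_lt_trans hz invp_lt1).
by rewrite /pert (absM Habs) absX z_eq1 expr1n mul1r abs_distC.
Qed.

Lemma pert_sub_approx z w : abs (z - 1) <= ip -> abs (w - 1) <= ip ->
  abs (pert z - pert w + (z - w)) <= ip * abs (z - w).
Proof.
move=> hz hw; have [z_le1 w_le1] := (abs_le1_pnear1 hz, abs_le1_pnear1 hw).
have -> : pert z - pert w + (z - w) =
    - ((z - w) * (z ^+ p - 1 ^+ p) + (w - 1) * (z ^+ p - w ^+ p)).
  by rewrite /pert expr1n; ring.
rewrite absN; apply: abs_add_le; rewrite (absM Habs).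
  rewrite mulrC ler_wpM2r ?(abs_ge0 Habs) // (le_trans _ hz) //.
  by rewrite abs_subX_le ?abs1.
exact: ler_pM (abs_ge0 Habs _) (abs_ge0 Habs _) hw (abs_subX_le _ z_le1 w_le1).
Qed.

Lemma Plam_dist l0 l1 z w :
  abs (z - 1) <= ip -> abs (w - 1) <= ip ->
  abs (l0 - 1) < 1 -> abs (l1 - 1) < 1 -> abs (l0 - l1) <= abs (z - w) ->
  abs (Plam p l0 z - Plam p l1 w) = p%:R * abs (z - w).
Proof.
move=> hz hw hl0 hl1 hl.
have [z_eq_w|z_neq_w] := eqVneq z w.
  move: hl; rewrite z_eq_w subrr abs0 => hl.
  have : abs (l0 - l1) == 0 by rewrite eq_le hl (abs_ge0 Habs).
  by rewrite abs_eq0b subr_eq0 => /eqP ->; rewrite subrr abs0 mulr0.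
set d := abs (z - w).
have d_gt0 : 0 < d by apply: abs_gt0; rewrite subr_eq0.
set B := l0 * pert z - l1 * pert w.
have err_lt : abs (pert z - pert w + (z - w)) < d.
  by apply: le_lt_trans (pert_sub_approx hz hw) _; rewrite gtr_pMl // invp_lt1.
have abs_B : abs B = d.
  have l1_eq1 : abs l1 = 1 := abs_eq1_near1 hl1.
  have dom_term : abs (l1 * (- (z - w) + (pert z - pert w + (z - w)))) = d.
    by rewrite (absM Habs) l1_eq1 mul1r abs_add_dom absN.
  have -> : B = l1 * (- (z - w) + (pert z - pert w + (z - w))) + (l0 - l1) * pert z.
    by rewrite /B; ring.
  rewrite abs_add_dom dom_term // (absM Habs).
  apply: le_lt_trans (_ : _ <= d * ip) _; last by rewrite gtr_pMr // invp_lt1.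
  exact: ler_pM (abs_ge0 Habs _) (abs_ge0 Habs _) hl (abs_pert hz).
have -> : Plam p l0 z - Plam p l1 w = (p%:R)^-1 * B + (z ^+ p.+1 - w ^+ p.+1).
  by rewrite !Plam_pert /B; ring.
rewrite abs_add_dom (absM Habs) abs_invp abs_B //.
apply: le_lt_trans (abs_subX_le _ (abs_le1_pnear1 hz) (abs_le1_pnear1 hw)) _.
by rewrite ltr_pMl // natp_gt1.
Qed.

Section PowerSeries.
Variable a : nat -> K.
Hypothesis a_le1 : forall i, abs (a i) <= 1.
Hypothesis a_cvg0 : forall e, 0 < e -> exists N, forall n, (N <= n)%N -> abs (a n) < e.

Local Notation Q := (ps_eval abs a).

Lemma psum_tail_lt z e : abs z <= 1 -> 0 < e ->
  exists N, forall n k, (N <= n)%N -> abs (psum a z (n + k) - psum a z n) < e.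
Proof.
move=> z_le1 e_gt0; have [N hN] := a_cvg0 e_gt0; exists N => n k n_ge.
have -> : psum a z (n + k) - psum a z n = \sum_(i < k) (a (n + i)%N * z ^+ (n + i)).
  by rewrite /psum big_split_ord /= addrAC subrr add0r.
apply: (abs_sum_lt (f := fun i => a (n + i)%N * z ^+ (n + i))) => // i _.
rewrite (absM Habs) absX; apply: le_lt_trans (hN (n + i)%N (leq_trans n_ge (leq_addr _ _))).
by rewrite ler_piMr ?(abs_ge0 Habs) // exprn_ile1 ?(abs_ge0 Habs).
Qed.

Lemma psum_cauchy z : abs z <= 1 -> abs_cauchy abs (psum a z).
Proof.
move=> z_le1 e e_gt0; have [N hN] := psum_tail_lt z_le1 e_gt0.
exists N => m n hm hn; have [n_le_m|m_lt_n] := leqP n m.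
  by rewrite -(subnKC n_le_m) hN.
by rewrite abs_distC -(subnKC (ltnW m_lt_n)) hN.
Qed.

Lemma ps_evalP z : abs z <= 1 -> abs_cvg abs (psum a z) (Q z).
Proof.
move=> z_le1; apply: (@xgetPex _ 0 [set l | abs_cvg abs (psum a z) l]).
exact: abs_complete Habs _ (psum_cauchy z_le1).
Qed.

Lemma ps_eval_le1 z : abs z <= 1 -> abs (Q z) <= 1.
Proof.
move=> z_le1; apply: abs_cvg_le (ps_evalP z_le1) _ => n.
apply: (abs_sum_le (f := fun i => a i * z ^+ i)) => // i _.
by rewrite (absM Habs) absX mulr_ile1 ?exprn_ge0 ?exprn_ile1 ?(abs_ge0 Habs).
Qed.

Lemma ps_eval_lip z w : abs z <= 1 -> abs w <= 1 -> abs (Q z - Q w) <= abs (z - w).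
Proof.
move=> z_le1 w_le1; apply: abs_cvg_le (abs_cvgB (ps_evalP z_le1) (ps_evalP w_le1)) _.
move=> n; rewrite /psum -sumrB.
apply: (abs_sum_le (f := fun i => a i * z ^+ i - a i * w ^+ i)) => [|i _].
  exact: (abs_ge0 Habs).
rewrite -mulrBr (absM Habs) -[X in _ <= X]mul1r.
exact: ler_pM (abs_ge0 Habs _) (abs_ge0 Habs _) (a_le1 i) (abs_subX_le _ z_le1 w_le1).
Qed.

Section FixedPoint.
Variable lam : K.
Hypothesis lam_near1 : abs (lam - 1) < 1.

Definition relax_coef := (p%:R : K) / lam.

(* The factor p/lam cancels the expanding part -(lam/p) z of Q*_lam, leaving a
   (1/p)-contraction with the same fixed points. *)
Definition relax z := z + relax_coef * (Qstar abs p a lam z - z).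

Lemma lam_neq0 : lam != 0.
Proof.
by apply: contra_eq_neq (abs_eq1_near1 lam_near1) => ->; rewrite abs0 eq_sym oner_eq0.
Qed.

Lemma abs_relax_coef : abs relax_coef = ip.
Proof. by rewrite (absM Habs) absV (abs_eq1_near1 lam_near1) invr1 mulr1 (abs_p Habs). Qed.

Lemma relax_coef_neq0 : relax_coef != 0.
Proof. by rewrite mulf_neq0 ?invr_eq0 ?lam_neq0 ?natpK_neq0. Qed.

Lemma relax_contract z w : abs (z - 1) <= ip -> abs (w - 1) <= ip ->
  abs (relax z - relax w) <= ip * abs (z - w).
Proof.
move=> hz hw; set k := (p%:R : K)^-1 * lam.
have coef_k : relax_coef * k = 1.
  by rewrite /relax_coef /k mulrACA mulfV ?natpK_neq0 // mulVf ?lam_neq0 // mulr1.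
set E := pert z - pert w + (z - w).
have -> : relax z - relax w = relax_coef *
      ((z ^+ p.+1 - w ^+ p.+1) + k * E + (Q z - Q w) - (z - w))
    + (1 - relax_coef * k) * (z - w).
  by rewrite /relax /Qstar !Plam_pert /E /k; ring.
rewrite coef_k subrr mul0r addr0 (absM Habs) abs_relax_coef.
rewrite ler_wpM2l ?(ltW invp_gt0) // abs_sub_le // abs_add_le //; last first.
  exact: ps_eval_lip (abs_le1_pnear1 hz) (abs_le1_pnear1 hw).
rewrite abs_add_le ?abs_subX_le ?(abs_le1_pnear1 hz) ?(abs_le1_pnear1 hw) //.
rewrite /k !(absM Habs) abs_invp (abs_eq1_near1 lam_near1) mulr1.
apply: le_trans (ler_wpM2l (ltW natp_gt0) (pert_sub_approx hz hw)) _.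
by rewrite mulrA mulfV ?mul1r // gt_eqF // natp_gt0.
Qed.

Definition hrad := abs (Q 1) / p%:R.

Lemma hrad_ge0 : 0 <= hrad.
Proof. by rewrite mulr_ge0 ?(abs_ge0 Habs) ?(ltW invp_gt0). Qed.

Lemma hrad_le : hrad <= ip.
Proof. by rewrite ler_piMl ?(ltW invp_gt0) ?ps_eval_le1 ?abs1. Qed.

Lemma relax1 : abs (relax 1 - 1) = hrad.
Proof.
have -> : relax 1 - 1 = relax_coef * Q 1 by rewrite /relax /Qstar /Plam !expr1n; ring.
by rewrite (absM Habs) abs_relax_coef mulrC.
Qed.

Lemma relax_near1 z : abs (z - 1) <= hrad -> abs (relax z - 1) <= hrad.
Proof.
move=> hz; rewrite -(subrKA (relax 1)) abs_add_le ?relax1 //.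
apply: le_trans (relax_contract (le_trans hz hrad_le) _) _.
  by rewrite subrr abs0 ltW // invp_gt0.
by apply: le_trans hz; rewrite ler_piMl ?(abs_ge0 Habs) ?(ltW invp_lt1).
Qed.

Definition relax_seq n := iter n relax 1.

Lemma relax_seq_near1 n : abs (relax_seq n - 1) <= hrad.
Proof.
elim: n => [|n IH]; first by rewrite /relax_seq /= subrr abs0 hrad_ge0.
exact: relax_near1.
Qed.

Lemma relax_seq_pnear1 n : abs (relax_seq n - 1) <= ip.
Proof. exact: le_trans (relax_seq_near1 n) hrad_le. Qed.

Lemma relax_seq_step n : abs (relax_seq n.+1 - relax_seq n) <= ip ^+ n * hrad.
Proof.
elim: n => [|n IH]; first by rewrite expr0 mul1r relax1.
have -> : relax_seq n.+2 - relax_seq n.+1 = relax (relax_seq n.+1) - relax (relax_seq n).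
  by [].
apply: le_trans (relax_contract (relax_seq_pnear1 _) (relax_seq_pnear1 _)) _.
by rewrite exprS -mulrA ler_wpM2l ?(ltW invp_gt0).
Qed.

Lemma relax_seq_tail n k : abs (relax_seq (n + k) - relax_seq n) <= ip ^+ n * hrad.
Proof.
elim: k => [|k IH].
  by rewrite addn0 subrr abs0 mulr_ge0 ?hrad_ge0 ?exprn_ge0 ?(ltW invp_gt0).
rewrite addnS -(subrKA (relax_seq (n + k))) abs_add_le //.
apply: le_trans (relax_seq_step _) _; rewrite ler_wpM2r ?hrad_ge0 //.
by rewrite ler_wiXn2l ?(ltW invp_gt0) ?(ltW invp_lt1) ?leq_addr.
Qed.

Lemma relax_seq_cauchy : abs_cauchy abs relax_seq.
Proof.
move=> e e_gt0; have [N hN] := exists_invn_expr_lt (prime_gt1 pr_p) e_gt0.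
have tail n m : (N <= n)%N -> (n <= m)%N -> abs (relax_seq m - relax_seq n) < e.
  move=> n_ge n_le; rewrite -(subnKC n_le); apply: le_lt_trans (relax_seq_tail _ _) _.
  apply: le_lt_trans (_ : _ <= ip ^+ n) _.
    by rewrite ler_piMr ?exprn_ge0 ?(ltW invp_gt0) // (le_trans hrad_le (ltW invp_lt1)).
  by apply: le_lt_trans hN; rewrite ler_wiXn2l ?(ltW invp_gt0) ?(ltW invp_lt1).
exists N => m n hm hn; have [n_le_m|m_lt_n] := leqP n m; first exact: tail.
by rewrite abs_distC tail // ltnW.
Qed.

Lemma relax_fixpoint : exists z, abs (z - 1) <= hrad /\ Qstar abs p a lam z = z.
Proof.
have [l l_lim] := abs_complete Habs relax_seq_cauchy.
have l_near1 : abs (l - 1) <= hrad.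
  apply: (abs_cvg_le (u := fun n => relax_seq n - 1)) relax_seq_near1 => e e_gt0.
  have [N hN] := l_lim e e_gt0; exists N => n n_ge.
  have -> : relax_seq n - 1 - (l - 1) = relax_seq n - l by ring.
  exact: hN.
exists l; split => //.
have : abs (relax l - l) == 0.
  rewrite eq_le (abs_ge0 Habs) andbT; apply/ler_addgt0Pr => e e_gt0.
  rewrite add0r; have [N hN] := l_lim e e_gt0.
  rewrite -(subrKA (relax (relax_seq N))); apply: abs_add_le; last exact: ltW (hN N.+1 _).
  apply: le_trans (relax_contract (le_trans l_near1 hrad_le) (relax_seq_pnear1 N)) _.
  rewrite abs_distC; apply: le_trans (ltW (hN N (leqnn N))).
  by rewrite ler_piMl ?(abs_ge0 Habs) ?(ltW invp_lt1).
rewrite abs_eq0b /relax addrAC subrr add0r mulf_eq0 (negbTE relax_coef_neq0) /=.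
by rewrite subr_eq0 => /eqP.
Qed.

Lemma hfixP : abs (hfix abs p a lam - 1) <= hrad /\
  Qstar abs p a lam (hfix abs p a lam) = hfix abs p a lam.
Proof. exact: (@xgetPex _ 0 [set z | _ /\ _]) relax_fixpoint. Qed.

End FixedPoint.

Local Notation h l := (hfix abs p a l).

Lemma hfix_near1 l : abs (l - 1) < 1 -> abs (h l - 1) <= ip.
Proof. by move=> hl; apply: le_trans (hfixP hl).1 hrad_le. Qed.

Lemma hfix_fixed l : abs (l - 1) < 1 -> Plam p l (h l) + Q (h l) = h l.
Proof. by move=> hl; have [_] := hfixP hl. Qed.

Lemma shift_pnear1 l x : abs (l - 1) < 1 -> abs (x - 1) <= ip ->
  abs (x + h l - 1 - 1) <= ip.
Proof.
move=> hl hx; have -> : x + h l - 1 - 1 = (x - 1) + (h l - 1) by ring.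
by rewrite abs_add_le ?hfix_near1.
Qed.

Lemma hfix_dist_lt l0 l1 : abs (l0 - 1) < 1 -> abs (l1 - 1) < 1 -> l0 != l1 ->
  abs (h l0 - h l1) < abs (l0 - l1).
Proof.
move=> hl0 hl1 l0_neq_l1; rewrite ltNge; apply/negP => hle.
have hP := Plam_dist (hfix_near1 hl0) (hfix_near1 hl1) hl0 hl1 hle.
have P_le : abs (Plam p l0 (h l0) - Plam p l1 (h l1)) <= abs (h l0 - h l1).
  have -> : Plam p l0 (h l0) - Plam p l1 (h l1) = (h l0 - h l1) - (Q (h l0) - Q (h l1)).
    by rewrite -{2}(hfix_fixed hl0) -{2}(hfix_fixed hl1); ring.
  apply: abs_sub_le => //.
  by apply: ps_eval_lip; apply: abs_le1_pnear1; apply: hfix_near1.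
have h_le0 : abs (h l0 - h l1) <= 0.
  have : (p%:R - 1) * abs (h l0 - h l1) <= 0 by rewrite mulrBl mul1r subr_le0 -hP.
  by rewrite pmulr_rle0 // subr_gt0 natp_gt1.
suff : 0 < 0 :> R by rewrite ltxx.
by apply: lt_le_trans (abs_gt0 _) (le_trans hle h_le0); rewrite subr_eq0.
Qed.

Lemma Qlam_near1 l x : abs (l - 1) < 1 -> abs (x - 1) <= ip ->
  abs (Qlam abs p a l x - 1) <= p%:R * abs (x - 1).
Proof.
move=> hl hx; set y := x + h l - 1.
have y_sub_h : y - h l = x - 1 by rewrite /y; ring.
have -> : Qlam abs p a l x - 1 = (Plam p l y - Plam p l (h l)) + (Q y - Q (h l)).
  by rewrite /Qlam /= -/y -[in X in X = _](hfix_fixed hl); ring.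
apply: abs_add_le.
  rewrite (Plam_dist (shift_pnear1 hl hx) (hfix_near1 hl)) ?y_sub_h //.
  by rewrite subrr abs0 (abs_ge0 Habs).
apply: le_trans (ps_eval_lip (abs_le1_pnear1 (shift_pnear1 hl hx))
  (abs_le1_pnear1 (hfix_near1 hl))) _.
by rewrite y_sub_h ler_peMl ?(abs_ge0 Habs) ?(ltW natp_gt1).
Qed.

Lemma Qlam_dist l0 l1 x0 x1 : abs (l0 - 1) < 1 -> abs (l1 - 1) < 1 -> l0 != l1 ->
  abs (x0 - 1) <= ip -> abs (x1 - 1) <= ip -> abs (l0 - l1) <= abs (x0 - x1) ->
  abs (Qlam abs p a l0 x0 - Qlam abs p a l1 x1) = p%:R * abs (x0 - x1).
Proof.
move=> hl0 hl1 l0_neq_l1 hx0 hx1 hd.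
set y0 := x0 + h l0 - 1; set y1 := x1 + h l1 - 1.
have h_lt := lt_le_trans (hfix_dist_lt hl0 hl1 l0_neq_l1) hd.
have d_lt : abs (x0 - x1) < p%:R * abs (x0 - x1).
  by rewrite ltr_pMl ?natp_gt1 // (le_lt_trans (abs_ge0 Habs _) h_lt).
have y_dist : abs (y0 - y1) = abs (x0 - x1).
  have -> : y0 - y1 = (x0 - x1) + (h l0 - h l1) by rewrite /y0 /y1; ring.
  exact: abs_add_dom.
have P_dist : abs (Plam p l0 y0 - Plam p l1 y1) = p%:R * abs (x0 - x1).
  rewrite -y_dist; apply: Plam_dist (shift_pnear1 hl0 hx0) (shift_pnear1 hl1 hx1) hl0 hl1 _.
  by rewrite y_dist.
have -> : Qlam abs p a l0 x0 - Qlam abs p a l1 x1 =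
    (Plam p l0 y0 - Plam p l1 y1) + ((Q y0 - Q y1) - (h l0 - h l1)).
  by rewrite /Qlam /= -/y0 -/y1; ring.
rewrite abs_add_dom P_dist //; apply: abs_add_lt; last by rewrite absN (lt_trans h_lt).
apply: le_lt_trans d_lt; rewrite -y_dist.
by apply: ps_eval_lip; apply: abs_le1_pnear1; apply: shift_pnear1.
Qed.

Lemma iter_Qlam_near1 l x M k : abs (l - 1) < 1 -> abs (x - 1) <= ip ^+ M ->
  (k <= M)%N -> abs (iter k (Qlam abs p a l) x - 1) <= ip ^+ (M - k).
Proof.
move=> hl hx; elim: k => [|k IH] k_lt; first by rewrite subn0.
have M_sub : (M - k = (M - k.+1).+1)%N by rewrite subnSK.
have {}IH : abs (iter k (Qlam abs p a l) x - 1) <= ip ^+ (M - k) by exact: IH (ltnW k_lt).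
rewrite iterS; apply: le_trans (Qlam_near1 hl (le_trans IH (invpX_le _))) _.
  by rewrite M_sub.
by rewrite -natp_mulVX -M_sub ler_wpM2l ?(ltW natp_gt0).
Qed.

Lemma iter_Qlam_dist l0 l1 x0 x1 M k :
  abs (l0 - 1) < 1 -> abs (l1 - 1) < 1 ->
  abs (x0 - 1) <= ip ^+ M -> abs (x1 - 1) <= ip ^+ M ->
  abs (l0 - l1) = abs (x0 - x1) -> (k <= M)%N ->
  abs (iter k (Qlam abs p a l0) x0 - iter k (Qlam abs p a l1) x1)
    = (p%:R : R) ^+ k * abs (l0 - l1).
Proof.
move=> hl0 hl1 hx0 hx1 hd.
have [l0_eq_l1|l0_neq_l1] := eqVneq l0 l1.
  move: hd; rewrite l0_eq_l1 subrr abs0 => /esym/eqP.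
  rewrite abs_eq0b subr_eq0 => /eqP -> _.
  by rewrite !subrr abs0 mulr0.
elim: k => [|k IH] k_lt; first by rewrite mul1r hd.
have k_ip (l x : K) : abs (l - 1) < 1 -> abs (x - 1) <= ip ^+ M ->
    abs (iter k (Qlam abs p a l) x - 1) <= ip.
  move=> hl hx; apply: le_trans (iter_Qlam_near1 hl hx (ltnW k_lt)) _.
  by rewrite invpX_le // subn_gt0.
rewrite !iterS (Qlam_dist hl0 hl1 l0_neq_l1 (k_ip _ _ hl0 hx0) (k_ip _ _ hl1 hx1)).
  by rewrite IH ?(ltnW k_lt) // exprS mulrA.
rewrite IH ?(ltnW k_lt) // ler_peMl ?(abs_ge0 Habs) //.
exact: exprn_ege1 (ltW natp_gt1).
Qed.

End PowerSeries.

Lemma in_HB_coef_le1 rhat a : 1 < rhat -> in_HB abs rhat a ->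
  ps_norm abs rhat a < rho R p -> forall i, abs (a i) <= 1.
Proof.
move=> rhat_gt1 a_HB a_norm i.
have a_ub : has_sup (range (fun i : nat => abs (a i) * rhat ^+ i)).
  split; first by exists (abs (a 0%N) * rhat ^+ 0); exists 0%N.
  exact: bounded_fun_has_ubound (cvg_seq_bounded (cvgP _ a_HB)).
apply: le_trans (_ : abs (a i) <= abs (a i) * rhat ^+ i) _.
  by rewrite ler_peMr ?(abs_ge0 Habs) // exprn_ege1 // ltW.
apply: le_trans (sup_upper_bound a_ub (ex_intro2 _ _ i I erefl)) _.
exact: ltW (lt_le_trans a_norm (rho_le1 _ (prime_gt1 pr_p))).
Qed.

Lemma in_HB_coef_cvg0 rhat a : 1 < rhat -> in_HB abs rhat a ->
  forall e, 0 < e -> exists N, forall n, (N <= n)%N -> abs (a n) < e.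
Proof.
move=> rhat_gt1 a_HB e e_gt0; have [N _ hN] := cvgr_dist_lt _ _ a_HB e e_gt0.
exists N => n n_ge; have := hN n n_ge; rewrite /= sub0r normrN ger0_norm; last first.
  by rewrite mulr_ge0 ?(abs_ge0 Habs) // exprn_ge0 // ltW // (lt_trans ltr01).
by apply: le_lt_trans; rewrite ler_peMr ?(abs_ge0 Habs) // exprn_ege1 // ltW.
Qed.

End CpAbsoluteValue.

Unset Implicit Arguments.

Theorem lemma3p12 (R : realType) (K : closedFieldType) (p : nat) (abs : K -> R)
  (rhat : R) (a : nat -> K) (M : nat) (x0 x1 lam0 lam1 : K) :
  prime p -> Cp_abs p abs ->
  (exists c : K, c != 0 /\ abs c = rhat) -> 1 < rhat ->
  in_HB abs rhat a -> ps_norm abs rhat a < rho R p ->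
  (1 <= M)%N ->
  abs (x0 - 1) <= (p%:R : R) ^- M -> abs (x1 - 1) <= (p%:R : R) ^- M ->
  abs (lam0 - 1) < 1 -> abs (lam1 - 1) < 1 ->
  abs (lam0 - lam1) = abs (x0 - x1) ->
  abs (iter M (Qlam abs p a lam0) x0 - iter M (Qlam abs p a lam1) x1)
    = (p%:R : R) ^+ M * abs (lam0 - lam1).
Proof.
move=> pr_p Habs _ rhat_gt1 a_HB a_norm _ hx0 hx1 hl0 hl1 hd.
have a_le1 := in_HB_coef_le1 pr_p Habs rhat_gt1 a_HB a_norm.
have a_cvg0 := in_HB_coef_cvg0 Habs rhat_gt1 a_HB.
by apply: (iter_Qlam_dist pr_p Habs a_le1 a_cvg0 hl0 hl1 _ _ hd (leqnn M));
  rewrite exprVn.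
Qed.
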